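(* Let $\kappa\in\mathbb{R}$ and $m>0$, and let $L_{\kappa,m}$ be as defined in the context. Let $0<\rho_1^*<\rho_2^*<\dots<R_\kappa$ be the points in $(0,R_\kappa)$ at which $L_{\kappa,m}$ attains local maxima or minima. Then the sequence $|L_{\kappa,m}(\rho_i^* )|$ is decreasing in $i$. Moreover, the first local maximum $\rho_1^*$ satisfies $\rho_1^*\ge\sin_\kappa^{-1}(m)$.
   Context: Define $\sin_\kappa(\rho)=\sin(\sqrt{\kappa}\rho)/\sqrt{\kappa}$ if $\kappa>0$, $\sin_\kappa(\rho)=\rho$ if $\kappa=0$, $\sin_\kappa(\rho)=\sinh(\sqrt{-\kappa}\rho)/\sqrt{-\kappa}$ if $\kappa<0$; $\cos_\kappa=(\sin_\kappa)'$, $\cot_\kappa=\cos_\kappa/\sin_\kappa$, $\tan_\kappa=1/\cot_\kappa$. Let $R_\kappa=\infty$ if $\kappa\le0$ and $R_\kappa=\pi/(2\sqrt{\kappa})$ if $\kappa>0$; $\sin_\kappa^{-1}$ denotes the inverse of $\sin_\kappa$ on $[0,R_\kappa)$. $L_{\kappa,m}$ is a solution of \[\sin_\kappa^2(\rho)L''(\rho)+\sin_\kappa(\rho)\cos_\kappa(\rho)L'(\rho)+(\sin_\kappa^2(\rho)-m^2)L(\rho)=0\] that is well defined (regular) at $\rho=0$ and positive on some interval $(0,\varepsilon)$ (so $L_{\kappa,m}(0)=0$ for $m>0$). *)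

From Stdlib Require Import Reals Lra.
From Coquelicot Require Import Coquelicot.
Open Scope R_scope.

Definition sinK (k rho : R) : R :=
  if Rlt_dec 0 k then sin (sqrt k * rho) / sqrt k
  else if Req_EM_T k 0 then rho
  else sinh (sqrt (- k) * rho) / sqrt (- k).

Definition cosK (k rho : R) : R :=
  if Rlt_dec 0 k then cos (sqrt k * rho)
  else if Req_EM_T k 0 then 1
  else cosh (sqrt (- k) * rho).

Definition RK (k : R) : Rbar :=
  if Rlt_dec 0 k then Finite (PI / (2 * sqrt k)) else p_infty.

Definition asinh (x : R) : R := ln (x + sqrt (x ^ 2 + 1)).

(** sin_kappa^{-1} : inverse of sin_kappa on [0, R_kappa).
    For kappa > 0 and arguments >= 1/sqrt kappa (outside the range of
    sin_kappa on [0,R_kappa)), Stdlib's asin clamps to pi/2, so the value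
    is R_kappa. *)
Definition sinK_inv (k x : R) : R :=
  if Rlt_dec 0 k then asin (sqrt k * x) / sqrt k
  else if Req_EM_T k 0 then x
  else asinh (sqrt (- k) * x) / sqrt (- k).

Definition inDom (k rho : R) : Prop := 0 < rho /\ Rbar_lt rho (RK k).

Definition local_max (L : R -> R) (rho : R) : Prop :=
  exists d : R, 0 < d /\ forall x, Rabs (x - rho) < d -> L x <= L rho.
Definition local_min (L : R -> R) (rho : R) : Prop :=
  exists d : R, 0 < d /\ forall x, Rabs (x - rho) < d -> L rho <= L x.
Definition local_extremum (L : R -> R) (rho : R) : Prop :=
  local_max L rho \/ local_min L rho.

Definition is_L (k m : R) (L : R -> R) : Prop :=
  (forall rho, inDom k rho ->
     ex_derive L rho /\ ex_derive (Derive L) rho /\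
     (sinK k rho) ^ 2 * Derive_n L 2 rho
     + sinK k rho * cosK k rho * Derive L rho
     + ((sinK k rho) ^ 2 - m ^ 2) * L rho = 0)
  /\ filterlim L (at_right 0) (locally (L 0))
  /\ (exists eps : R, 0 < eps /\ forall rho, 0 < rho < eps -> 0 < L rho).

(* Write p = sin_k L' for the flux.  The equation says sin_k p' = (m^2 - sin_k^2) L.
   Near 0 we have L > 0, and L' cannot stay <= 0 there, for then p would be increasing and
   negative, forcing L' <= -c / sin_k and a logarithmic blow-up of L at 0.  While sin_k <= m
   the product p L is nondecreasing, so L and L' stay positive: every extremum lies where
   sin_k > m, whence rho_1^* >= sin_k^{-1}(m).  There the Sonin function
   L^2 + p^2 / (sin_k^2 - m^2) is nonincreasing, with derivative -2 p^2 sin_k cos_k / (...)^2,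
   and it equals L^2 at critical points.  It is not constant between two of them, since then
   p = 0 on an interval, so L = L' = 0 at a point, which the Gronwall estimate for the
   energy L^2 + p^2 rules out. *)

From Stdlib Require Import Reals Lra Classical.
From Coquelicot Require Import Coquelicot.
Open Scope R_scope.

Lemma is_derive_Rmult (f g : R -> R) (x df dg : R) :
  is_derive f x df -> is_derive g x dg ->
  is_derive (fun t => f t * g t) x (df * g x + f x * dg).
Proof. intros Hf Hg. exact (is_derive_mult f g x df dg Hf Hg Rmult_comm). Qed.

Lemma derive_nonneg_le (f f' : R -> R) (a b : R) : a <= b ->
  (forall x, a <= x <= b -> is_derive f x (f' x)) ->
  (forall x, a < x < b -> 0 <= f' x) -> f a <= f b.
Proof.
  intros Hab Hd Hpos. destruct (Req_dec a b) as [<-|Hne]; [lra|].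
  destruct (MVT_cor2 f f' a b) as [c [Hc Hcab]]; [lra|..].
  - intros c Hc. apply is_derive_Reals, Hd, Hc.
  - specialize (Hpos c Hcab). nra.
Qed.

Lemma derive_nonpos_ge (f f' : R -> R) (a b : R) : a <= b ->
  (forall x, a <= x <= b -> is_derive f x (f' x)) ->
  (forall x, a < x < b -> f' x <= 0) -> f b <= f a.
Proof.
  intros Hab Hd Hneg.
  enough (- f a <= - f b) by lra.
  apply (derive_nonneg_le (fun t => - f t) (fun t => - f' t)); [exact Hab| |].
  - intros x Hx. exact (is_derive_opp f x _ (Hd x Hx)).
  - intros x Hx. specialize (Hneg x Hx). lra.
Qed.

Lemma derive_pos_lt (f f' : R -> R) (a b : R) : a < b ->
  (forall x, a <= x <= b -> is_derive f x (f' x)) ->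
  (forall x, a < x < b -> 0 < f' x) -> f a < f b.
Proof.
  intros Hab Hd Hpos.
  destruct (MVT_cor2 f f' a b) as [c [Hc Hcab]]; [exact Hab|..].
  - intros c Hc. apply is_derive_Reals, Hd, Hc.
  - specialize (Hpos c Hcab). nra.
Qed.

Lemma is_derive_const_on (f : R -> R) (a b c t l : R) : a < t < b ->
  (forall x, a < x < b -> f x = c) -> is_derive f t l -> l = 0.
Proof.
  intros Ht Hconst Hd.
  assert (Hpos : 0 < Rmin (t - a) (b - t)) by (apply Rmin_pos; lra).
  assert (Hloc : locally t (fun x => c = f x)).
  { exists (mkposreal _ Hpos). intros x Hx. symmetry. apply Hconst.
    change (Rabs (x - t) < Rmin (t - a) (b - t)) in Hx. apply Rabs_def2 in Hx.
    pose proof (Rmin_l (t - a) (b - t)). pose proof (Rmin_r (t - a) (b - t)). lra. }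
  pose proof (is_derive_ext_loc _ f t 0 Hloc (is_derive_const c t)) as Hd0.
  apply is_derive_unique in Hd. apply is_derive_unique in Hd0. congruence.
Qed.

Lemma local_extremum_is_derive_0 (f : R -> R) (r l : R) :
  local_extremum f r -> is_derive f r l -> l = 0.
Proof.
  intros Hext Hd. apply is_derive_Reals in Hd.
  assert (pr : derivable_pt f r) by (exists l; exact Hd).
  rewrite <- (derive_pt_eq_0 f r l pr Hd).
  destruct Hext as [[d [Hd0 Hmax]] | [d [Hd0 Hmin]]].
  - apply (deriv_maximum f (r - d) (r + d) r pr); try lra.
    intros x H1 H2. apply Hmax, Rabs_def1; lra.
  - apply (deriv_minimum f (r - d) (r + d) r pr); try lra.
    intros x H1 H2. apply Hmin, Rabs_def1; lra.
Qed.

Lemma cross_term_le (x y u K : R) : - K <= u <= K ->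
  - (K * (x ^ 2 + y ^ 2)) <= 2 * x * y * u.
Proof.
  intros Hu.
  assert (0 <= (K + u) * ((x + y) * (x + y))) by (apply Rmult_le_pos; [lra | apply Rle_0_sqr]).
  assert (0 <= (K - u) * ((x - y) * (x - y))) by (apply Rmult_le_pos; [lra | apply Rle_0_sqr]).
  nra.
Qed.

Lemma exp_weighted_le (E E' : R -> R) (K a b : R) : a <= b ->
  (forall x, a <= x <= b -> is_derive E x (E' x)) ->
  (forall x, a < x < b -> - (K * E x) <= E' x) ->
  E a * exp (K * a) <= E b * exp (K * b).
Proof.
  intros Hab Hd Hlow.
  apply (derive_nonneg_le (fun t => E t * exp (K * t))
           (fun t => E' t * exp (K * t) + E t * (exp (K * t) * K))); [exact Hab| |].
  - intros x Hx. apply (is_derive_Rmult E (fun t => exp (K * t))); [exact (Hd x Hx)|].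
    auto_derive; [exact I | ring].
  - intros x Hx. specialize (Hlow x Hx). pose proof (exp_pos (K * x)). nra.
Qed.

Lemma right_limit_not_log_bounded (f s : R -> R) (t0 l G c : R) :
  0 < t0 -> 0 < c -> filterlim f (at_right 0) (locally l) ->
  continuous s 0 -> s 0 = 0 -> (forall t, 0 < t <= t0 -> 0 < s t) ->
  ~ (forall t, 0 < t <= t0 -> G - c * ln (s t) <= f t).
Proof.
  intros Ht0 Hc Hf Hs Hs0 Hspos Hbound.
  set (A := (G - l - 1) / c).
  destruct (Hf (ball l 1) (locally_ball l (mkposreal 1 Rlt_0_1))) as [d1 Hd1].
  unfold continuous in Hs. rewrite Hs0 in Hs.
  destruct (Hs (ball 0 (exp A)) (locally_ball 0 (mkposreal _ (exp_pos A)))) as [d2 Hd2].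
  set (t := Rmin d1 (Rmin d2 t0) / 2).
  pose proof (Rmin_l d1 (Rmin d2 t0)). pose proof (Rmin_r d1 (Rmin d2 t0)).
  pose proof (Rmin_l d2 t0). pose proof (Rmin_r d2 t0).
  assert (Hmin : 0 < Rmin d1 (Rmin d2 t0)) by (repeat apply Rmin_pos; try apply cond_pos; lra).
  assert (Ht : 0 < t <= t0) by (unfold t; lra).
  assert (Hball : forall d : posreal, t < d -> ball 0 d t).
  { intros d Hd. change (Rabs (t - 0) < d). rewrite Rminus_0_r, Rabs_right; lra. }
  assert (Hft : Rabs (f t - l) < 1) by (apply (Hd1 t); [apply Hball; unfold t; lra | lra]).
  assert (Hst : Rabs (s t - 0) < exp A) by (apply (Hd2 t), Hball; unfold t; lra).
  specialize (Hspos t Ht).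
  rewrite Rminus_0_r, Rabs_right in Hst by lra.
  assert (Hln : ln (s t) < A) by (rewrite <- (ln_exp A); apply ln_increasing; lra).
  assert (c * ln (s t) < c * A) by (apply Rmult_lt_compat_l; lra).
  assert (c * A = G - l - 1) by (unfold A; field; lra).
  specialize (Hbound t Ht). apply Rabs_def2 in Hft. lra.
Qed.

Lemma is_derive_sinK (k x : R) : is_derive (sinK k) x (cosK k x).
Proof.
  unfold sinK, cosK. destruct (Rlt_dec 0 k) as [Hk|Hk].
  - assert (0 < sqrt k) by (apply sqrt_lt_R0; lra).
    auto_derive; [exact I | field; lra].
  - destruct (Req_EM_T k 0) as [_|Hk0].
    + auto_derive; [exact I | ring].
    + assert (0 < sqrt (- k)) by (apply sqrt_lt_R0; lra).
      unfold sinh, cosh. auto_derive; [exact I | field; lra].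
Qed.

Lemma continuous_cosK (k x : R) : continuity_pt (cosK k) x.
Proof.
  unfold cosK. destruct (Rlt_dec 0 k).
  - apply (continuity_pt_comp (fun t => sqrt k * t) cos); [reg | apply continuity_cos].
  - destruct (Req_EM_T k 0); [apply continuity_pt_const; intros a b; reflexivity |].
    unfold cosh. reg.
Qed.

Lemma sinK_0 (k : R) : sinK k 0 = 0.
Proof.
  unfold sinK. destruct (Rlt_dec 0 k).
  - rewrite Rmult_0_r, sin_0. field. apply Rgt_not_eq, sqrt_lt_R0; lra.
  - destruct (Req_EM_T k 0); [reflexivity|].
    unfold sinh. rewrite Rmult_0_r, Ropp_0. field. apply Rgt_not_eq, sqrt_lt_R0; lra.
Qed.

Lemma sqrt_mul_lt_PI2 (k r : R) : 0 < k -> Rbar_lt r (RK k) -> sqrt k * r < PI / 2.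
Proof.
  intros Hk Hr. unfold RK in Hr. destruct (Rlt_dec 0 k) as [_|]; [|lra]. simpl in Hr.
  assert (0 < sqrt k) by (apply sqrt_lt_R0; lra).
  apply (Rmult_lt_compat_l (sqrt k)) in Hr; [|lra].
  replace (sqrt k * (PI / (2 * sqrt k))) with (PI / 2) in Hr by (field; lra). exact Hr.
Qed.

Lemma cosK_pos (k x : R) : 0 <= x -> Rbar_lt x (RK k) -> 0 < cosK k x.
Proof.
  intros Hx Hr. unfold cosK. destruct (Rlt_dec 0 k) as [Hk|Hk].
  - pose proof (sqrt_mul_lt_PI2 k x Hk Hr). pose proof (sqrt_pos k). pose proof PI_RGT_0.
    apply cos_gt_0; nra.
  - destruct (Req_EM_T k 0); [lra|].
    unfold cosh. pose proof (exp_pos (sqrt (- k) * x)).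
    pose proof (exp_pos (- (sqrt (- k) * x))). lra.
Qed.

Lemma sinK_lt (k x y : R) : 0 <= x < y -> Rbar_lt y (RK k) -> sinK k x < sinK k y.
Proof.
  intros Hxy Hy. apply (derive_pos_lt (sinK k) (cosK k)); [lra | intros; apply is_derive_sinK |].
  intros z Hz. apply cosK_pos; [lra|].
  apply (Rbar_le_lt_trans _ y); [simpl; lra | exact Hy].
Qed.

Lemma sinK_le (k x y : R) : 0 <= x <= y -> Rbar_lt y (RK k) -> sinK k x <= sinK k y.
Proof.
  intros Hxy Hy. destruct (Req_dec x y) as [->|Hne]; [lra|].
  left. apply sinK_lt; [lra | exact Hy].
Qed.

Lemma sinK_pos (k x : R) : inDom k x -> 0 < sinK k x.
Proof.
  intros [Hx Hr]. rewrite <- (sinK_0 k). apply sinK_lt; [lra | exact Hr].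
Qed.

Lemma inDom_le (k a b : R) : inDom k b -> 0 < a -> forall x, a <= x <= b -> inDom k x.
Proof.
  intros [_ Hb] Ha Hx. split; [lra|].
  apply (Rbar_le_lt_trans _ b); [simpl; lra | exact Hb].
Qed.

Lemma sinh_asinh (y : R) : sinh (asinh y) = y.
Proof.
  unfold sinh, asinh.
  assert (Hsq : sqrt (y ^ 2 + 1) * sqrt (y ^ 2 + 1) = y ^ 2 + 1) by (apply sqrt_sqrt; nra).
  pose proof (sqrt_pos (y ^ 2 + 1)).
  assert (Hu : 0 < y + sqrt (y ^ 2 + 1)) by nra.
  rewrite exp_Ropp, exp_ln by exact Hu.
  assert (Hinv : / (y + sqrt (y ^ 2 + 1)) = sqrt (y ^ 2 + 1) - y).
  { apply (Rmult_eq_reg_l (y + sqrt (y ^ 2 + 1))); [|lra]. rewrite Rinv_r by lra. nra. }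
  rewrite Hinv. lra.
Qed.

Lemma sinh_lt (x y : R) : x < y -> sinh x < sinh y.
Proof.
  intros Hxy. unfold sinh.
  assert (exp x < exp y) by (apply exp_increasing; lra).
  assert (exp (- y) < exp (- x)) by (apply exp_increasing; lra). lra.
Qed.

Lemma asinh_le_of_lt_sinh (x y : R) : y < sinh x -> asinh y <= x.
Proof.
  intros Hy. apply Rnot_lt_le. intros Hx.
  apply sinh_lt in Hx. rewrite sinh_asinh in Hx. lra.
Qed.

Lemma asin_le_of_lt_sin (x y : R) : 0 <= x <= PI / 2 -> 0 <= y < sin x -> asin y <= x.
Proof.
  intros Hx Hy. apply Rnot_lt_le. intros Hlt.
  pose proof (SIN_bound x). pose proof (asin_bound y).
  assert (sin x < sin (asin y)) by (apply sin_increasing_1; lra).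
  rewrite sin_asin in * by lra. lra.
Qed.

Lemma sinK_inv_le (k y r : R) : 0 < y -> inDom k r -> y < sinK k r -> sinK_inv k y <= r.
Proof.
  intros Hy [Hr HrK] Hlt. unfold sinK_inv. unfold sinK in Hlt.
  destruct (Rlt_dec 0 k) as [Hk|Hk].
  - assert (Hs : 0 < sqrt k) by (apply sqrt_lt_R0; lra).
    pose proof (sqrt_mul_lt_PI2 k r Hk HrK).
    apply Rlt_div_r in Hlt; [|lra]. apply Rle_div_l; [lra|].
    rewrite (Rmult_comm y) in Hlt. rewrite (Rmult_comm r).
    apply asin_le_of_lt_sin; [nra | split; [nra | lra]].
  - destruct (Req_EM_T k 0); [lra|].
    assert (Hs : 0 < sqrt (- k)) by (apply sqrt_lt_R0; lra).
    apply Rlt_div_r in Hlt; [|lra]. apply Rle_div_l; [lra|].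
    rewrite (Rmult_comm y) in Hlt. rewrite (Rmult_comm r).
    apply asinh_le_of_lt_sinh; lra.
Qed.

Section Solution.

Variables (k m : R) (L : R -> R).
Hypotheses (m_pos : 0 < m) (L_sol : is_L k m L).

Lemma is_derive_L (x : R) : inDom k x -> is_derive L x (Derive L x).
Proof. intros Hx. apply Derive_correct, (proj1 L_sol x Hx). Qed.

Lemma continuity_pt_L (x : R) : inDom k x -> continuity_pt L x.
Proof.
  intros Hx. apply continuity_pt_filterlim.
  exact (ex_derive_continuous L x (proj1 (proj1 L_sol x Hx))).
Qed.

Definition flux (t : R) : R := sinK k t * Derive L t.

Lemma is_derive_flux (x : R) : inDom k x ->
  is_derive flux x ((m ^ 2 - sinK k x ^ 2) * L x / sinK k x).
Proof.
  intros Hx. pose proof (sinK_pos k x Hx).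
  destruct (proj1 L_sol x Hx) as [_ [HL' Hode]].
  change (Derive_n L 2 x) with (Derive (Derive L) x) in Hode.
  replace ((m ^ 2 - sinK k x ^ 2) * L x / sinK k x)
    with (cosK k x * Derive L x + sinK k x * Derive (Derive L) x)
    by (field_simplify_eq; [nra | lra]).
  exact (is_derive_Rmult _ _ x _ _ (is_derive_sinK k x) (Derive_correct _ _ HL')).
Qed.

Lemma L_log_lower_bound (t0 c : R) : inDom k t0 -> 0 < c ->
  (forall t, 0 < t <= t0 -> Derive L t <= - c / sinK k t) ->
  exists c' G, 0 < c' /\ forall t, 0 < t <= t0 -> G - c' * ln (sinK k t) <= L t.
Proof.
  intros Ht0 Hc Hbound. pose proof (proj1 Ht0).
  destruct (continuity_ab_maj (cosK k) 0 t0) as [xM [HM _]];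
    [lra | intros; apply continuous_cosK |].
  assert (HcosM : 0 < cosK k xM).
  { apply (Rlt_le_trans _ (cosK k t0)); [apply cosK_pos; [lra | apply Ht0] | apply HM; lra]. }
  (* Dividing by the maximum of cos_k on [0, t0] gives c' (ln sin_k)' <= c / sin_k. *)
  set (c' := c / cosK k xM).
  exists c', (L t0 + c' * ln (sinK k t0)).
  split; [apply Rdiv_lt_0_compat; lra |]. intros t Ht.
  pose proof (inDom_le k t t0 Ht0 (proj1 Ht)) as Hdom.
  enough (L t0 + c' * ln (sinK k t0) <= L t + c' * ln (sinK k t)) by lra.
  apply (derive_nonpos_ge (fun x => L x + c' * ln (sinK k x))
           (fun x => Derive L x + c' * (cosK k x * / sinK k x))); [lra | |].
  - intros x Hx. pose proof (sinK_pos k x (Hdom x Hx)) as HSx.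
    apply (is_derive_plus L (fun x => c' * ln (sinK k x))); [exact (is_derive_L x (Hdom x Hx)) |].
    apply is_derive_scal.
    exact (is_derive_comp ln (sinK k) x _ _ (is_derive_ln _ HSx) (is_derive_sinK k x)).
  - intros x Hx. pose proof (sinK_pos k x (Hdom x ltac:(lra))) as HSx.
    specialize (Hbound x ltac:(lra)).
    assert (c' * cosK k x <= c).
    { replace c with (c' * cosK k xM) by (unfold c'; field; lra).
      apply Rmult_le_compat_l; [unfold c'; apply Rdiv_le_0_compat; lra | apply HM; lra]. }
    assert (c' * (cosK k x * / sinK k x) <= c / sinK k x).
    { rewrite <- Rmult_assoc. apply Rmult_le_compat_r; [left; apply Rinv_0_lt_compat |]; lra. }
    unfold Rdiv in *. lra.
Qed.

Lemma L_not_log_divergent (t0 c : R) : inDom k t0 -> 0 < c ->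
  ~ (forall t, 0 < t <= t0 -> Derive L t <= - c / sinK k t).
Proof.
  intros Ht0 Hc Hbound.
  destruct (L_log_lower_bound t0 c Ht0 Hc Hbound) as [c' [G [Hc' HG]]].
  apply (right_limit_not_log_bounded L (sinK k) t0 (L 0) G c'); try assumption.
  - apply Ht0.
  - exact (proj1 (proj2 L_sol)).
  - exact (ex_derive_continuous (sinK k) 0 (ex_intro _ _ (is_derive_sinK k 0))).
  - apply sinK_0.
  - intros t Ht. apply sinK_pos, (inDom_le k t t0 Ht0); lra.
Qed.

Lemma Derive_pos_near_0 (b : R) : inDom k b -> sinK k b <= m ->
  exists t, 0 < t < b /\ 0 < L t /\ 0 < Derive L t.
Proof.
  intros Hb HSb.
  destruct (proj2 (proj2 L_sol)) as [eps [Heps Hpos]].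
  pose proof (Rmin_l eps b). pose proof (Rmin_r eps b).
  set (d := Rmin eps b) in *.
  assert (Hd : 0 < d) by (apply Rmin_pos; [lra | apply Hb]).
  assert (Hdom : forall t, 0 < t <= d -> inDom k t)
    by (intros t Ht; apply (inDom_le k t b Hb); lra).
  assert (Hflux' : forall t, 0 < t < d -> 0 < (m ^ 2 - sinK k t ^ 2) * L t / sinK k t).
  { intros t Ht. pose proof (sinK_pos k t (Hdom t ltac:(lra))).
    assert (sinK k t < m).
    { apply (Rlt_le_trans _ (sinK k b)); [apply sinK_lt; [lra | apply Hb] | exact HSb]. }
    specialize (Hpos t ltac:(lra)).
    apply Rdiv_lt_0_compat; [apply Rmult_lt_0_compat; nra | lra]. }
  apply NNPP. intros Hnone.
  assert (Hneg : forall t, 0 < t < d -> Derive L t <= 0).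
  { intros t Ht. apply Rnot_lt_le. intros Hlt. apply Hnone.
    exists t. split; [lra | split; [apply Hpos; lra | exact Hlt]]. }
  (* The flux increases on (0, d), so it is negative at t1 and bounds sin_k L' from above
     below t1. *)
  set (t1 := d / 2).
  assert (Hflux_t1 : flux t1 < 0).
  { apply (Rlt_le_trans _ (flux (3 * d / 4))).
    - apply (derive_pos_lt flux (fun x => (m ^ 2 - sinK k x ^ 2) * L x / sinK k x));
        [unfold t1; lra | intros x Hx; apply is_derive_flux, Hdom; unfold t1 in Hx; lra |].
      intros x Hx. apply Hflux'. unfold t1 in Hx. lra.
    - unfold flux. pose proof (sinK_pos k (3 * d / 4) (Hdom (3 * d / 4) ltac:(lra))).
      pose proof (Hneg (3 * d / 4) ltac:(lra)). nra. }
  apply (L_not_log_divergent t1 (- flux t1)); [apply Hdom; unfold t1; lra | lra |].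
  intros t Ht. unfold t1 in Ht. pose proof (sinK_pos k t (Hdom t ltac:(lra))).
  assert (flux t <= flux t1).
  { apply (derive_nonneg_le flux (fun x => (m ^ 2 - sinK k x ^ 2) * L x / sinK k x));
      [unfold t1; lra | intros x Hx; apply is_derive_flux, Hdom; unfold t1 in Hx; lra |].
    intros x Hx. left. apply Hflux'. unfold t1 in Hx. lra. }
  rewrite Ropp_involutive. apply Rle_div_r; [lra |]. unfold flux in *. lra.
Qed.

Lemma flux_mul_L_le (a b : R) : 0 < a <= b -> inDom k b -> sinK k b <= m ->
  flux a * L a <= flux b * L b.
Proof.
  intros Hab Hb HSb.
  pose proof (inDom_le k a b Hb (proj1 Hab)) as Hdom.
  apply (derive_nonneg_le (fun t => flux t * L t)
           (fun t => (m ^ 2 - sinK k t ^ 2) * L t / sinK k t * L t + flux t * Derive L t));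
    [lra | |].
  - intros x Hx.
    exact (is_derive_Rmult _ _ x _ _ (is_derive_flux x (Hdom x Hx)) (is_derive_L x (Hdom x Hx))).
  - intros x Hx. pose proof (sinK_pos k x (Hdom x ltac:(lra))).
    assert (sinK k x <= m).
    { apply (Rle_trans _ (sinK k b)); [apply sinK_le; [lra | apply Hb] | exact HSb]. }
    assert (0 <= (m ^ 2 - sinK k x ^ 2) * (L x * L x) / sinK k x).
    { apply Rdiv_le_0_compat; [apply Rmult_le_pos; nra | lra]. }
    unfold flux. replace ((m ^ 2 - sinK k x ^ 2) * L x / sinK k x * L x)
      with ((m ^ 2 - sinK k x ^ 2) * (L x * L x) / sinK k x) by (field; lra).
    nra.
Qed.

Lemma L_Derive_pos_of_sinK_le (b : R) : inDom k b -> sinK k b <= m ->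
  0 < L b /\ 0 < Derive L b.
Proof.
  intros Hb HSb.
  destruct (Derive_pos_near_0 b Hb HSb) as [t1 [Ht1 [HLt1 HL't1]]].
  pose proof (inDom_le k t1 b Hb (proj1 Ht1)) as Hdom.
  assert (Hphi : forall t, t1 <= t <= b -> 0 < flux t * L t).
  { intros t Ht. pose proof (sinK_pos k t1 (Hdom t1 ltac:(lra))).
    apply (Rlt_le_trans _ (flux t1 * L t1)); [unfold flux; apply Rmult_lt_0_compat; nra |].
    apply flux_mul_L_le; [lra | apply Hdom; lra |].
    apply (Rle_trans _ (sinK k b)); [apply sinK_le; [lra | apply Hb] | exact HSb]. }
  assert (HLb : 0 < L b).
  { apply Rnot_le_lt. intros HLb.
    assert (L b <> 0) by (intros E; pose proof (Hphi b ltac:(lra)); rewrite E in *; lra).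
    destruct (Ranalysis5.IVT_interv (fun x => - L x) t1 b) as [z [Hz HLz]]; [| lra | lra | lra |].
    - intros x Hx. exact (continuity_pt_opp L x (continuity_pt_L x (Hdom x Hx))).
    - pose proof (Hphi z Hz). assert (L z = 0) as E by lra. rewrite E in *. lra. }
  split; [exact HLb |].
  assert (Hflux_b : 0 < flux b).
  { apply (Rmult_lt_reg_r (L b)); [exact HLb | rewrite Rmult_0_l; apply Hphi; lra]. }
  apply (Rmult_lt_reg_l (sinK k b)); [apply sinK_pos, Hb | rewrite Rmult_0_r; exact Hflux_b].
Qed.

Definition energy (t : R) : R := L t ^ 2 + flux t ^ 2.

Lemma is_derive_energy (x : R) : inDom k x ->
  is_derive energy x (2 * L x * flux x * ((1 + m ^ 2) / sinK k x - sinK k x)).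
Proof.
  intros Hx. pose proof (sinK_pos k x Hx).
  replace (2 * L x * flux x * ((1 + m ^ 2) / sinK k x - sinK k x))
    with (INR 2 * Derive L x * L x ^ 1
          + INR 2 * ((m ^ 2 - sinK k x ^ 2) * L x / sinK k x) * flux x ^ 1)
    by (simpl; unfold flux; field; lra).
  apply (is_derive_plus (fun t => L t ^ 2) (fun t => flux t ^ 2));
    apply is_derive_pow; [apply is_derive_L | apply is_derive_flux]; exact Hx.
Qed.

Lemma L_Derive_not_both_0 (r : R) : inDom k r -> L r = 0 -> Derive L r = 0 -> False.
Proof.
  intros Hr HLr HL'r.
  destruct (proj2 (proj2 L_sol)) as [eps [Heps Hpos]].
  pose proof (Rmin_l eps r). pose proof (Rmin_r eps r).
  assert (0 < Rmin eps r) by (apply Rmin_pos; [lra | apply Hr]).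
  set (a := Rmin eps r / 2).
  assert (Ha : 0 < a < r) by (unfold a; lra).
  assert (HLa : 0 < L a) by (apply Hpos; unfold a; lra).
  pose proof (inDom_le k a r Hr (proj1 Ha)) as Hdom.
  pose proof (sinK_pos k a (Hdom a ltac:(lra))).
  (* K bounds |(1 + m^2) / sin_k - sin_k| on [a, r]. *)
  set (K := (1 + m ^ 2) / sinK k a + sinK k r).
  assert (Hgrowth : energy a * exp (K * a) <= energy r * exp (K * r)).
  { apply (exp_weighted_le energy
             (fun x => 2 * L x * flux x * ((1 + m ^ 2) / sinK k x - sinK k x)) K a r);
      [lra | intros x Hx; apply is_derive_energy, Hdom, Hx |].
    intros x Hx. pose proof (sinK_pos k x (Hdom x ltac:(lra))).
    assert (sinK k a <= sinK k x) by (apply sinK_le; [lra | apply (Hdom x); lra]).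
    assert (sinK k x <= sinK k r) by (apply sinK_le; [lra | apply Hr]).
    assert ((1 + m ^ 2) / sinK k x <= (1 + m ^ 2) / sinK k a).
    { apply Rmult_le_compat_l; [nra | apply Rinv_le_contravar; lra]. }
    assert (0 <= (1 + m ^ 2) / sinK k x) by (apply Rdiv_le_0_compat; nra).
    apply cross_term_le. unfold K. lra. }
  assert (Henergy_r : energy r = 0) by (unfold energy, flux; rewrite HLr, HL'r; ring).
  assert (Henergy_a : 0 < energy a) by (unfold energy; pose proof (pow2_ge_0 (flux a)); nra).
  rewrite Henergy_r, Rmult_0_l in Hgrowth. pose proof (exp_pos (K * a)). nra.
Qed.

Definition sonin (t : R) : R := L t ^ 2 + flux t ^ 2 / (sinK k t ^ 2 - m ^ 2).

Lemma is_derive_sonin (x : R) : inDom k x -> m < sinK k x ->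
  is_derive sonin x (- (2 * flux x ^ 2 * sinK k x * cosK k x / (sinK k x ^ 2 - m ^ 2) ^ 2)).
Proof.
  intros Hx HSm. pose proof (sinK_pos k x Hx).
  unfold sonin. auto_derive.
  - repeat split;
      try (eexists; first [apply is_derive_L | apply is_derive_flux | apply is_derive_sinK]; exact Hx).
    nra.
  - change (Derive (fun t => L t) x) with (Derive L x).
    change (Derive (fun t => flux t) x) with (Derive flux x).
    change (Derive (fun t => sinK k t) x) with (Derive (sinK k) x).
    rewrite (is_derive_unique _ _ _ (is_derive_flux x Hx)),
      (is_derive_unique _ _ _ (is_derive_sinK k x)).
    unfold flux. field. nra.
Qed.

Lemma sonin_nonincreasing (x y : R) : inDom k y -> 0 < x <= y -> m < sinK k x ->
  sonin y <= sonin x.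
Proof.
  intros Hy Hxy HSx.
  pose proof (inDom_le k x y Hy (proj1 Hxy)) as Hdom.
  assert (HS : forall t, x <= t <= y -> m < sinK k t).
  { intros t Ht. apply (Rlt_le_trans _ (sinK k x)); [exact HSx |].
    apply sinK_le; [lra | apply Hdom; lra]. }
  apply (derive_nonpos_ge sonin
    (fun t => - (2 * flux t ^ 2 * sinK k t * cosK k t / (sinK k t ^ 2 - m ^ 2) ^ 2))); [lra | |].
  - intros t Ht. apply is_derive_sonin; [apply Hdom | apply HS]; exact Ht.
  - intros t Ht. pose proof (sinK_pos k t (Hdom t ltac:(lra))). pose proof (HS t ltac:(lra)).
    pose proof (cosK_pos k t ltac:(lra) (proj2 (Hdom t ltac:(lra)))).
    enough (0 <= 2 * flux t ^ 2 * sinK k t * cosK k t / (sinK k t ^ 2 - m ^ 2) ^ 2) by lra.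
    assert (0 < sinK k t ^ 2 - m ^ 2) by nra.
    apply Rdiv_le_0_compat; [| apply pow_lt; lra].
    pose proof (pow2_ge_0 (flux t)).
    apply Rmult_le_pos; [apply Rmult_le_pos; [apply Rmult_le_pos |] |]; lra.
Qed.

Lemma flux_not_constantly_0 (a b t : R) : a < t < b -> inDom k t -> sinK k t <> m ->
  ~ (forall x, a < x < b -> flux x = 0).
Proof.
  intros Ht Hdom HSm Hzero. pose proof (sinK_pos k t Hdom).
  pose proof (is_derive_const_on flux a b 0 t _ Ht Hzero (is_derive_flux t Hdom)) as Hflux'.
  assert (Hcoef : m ^ 2 - sinK k t ^ 2 <> 0).
  { intros E. apply HSm, Rsqr_inj; [lra | lra | unfold Rsqr; nra]. }
  apply (L_Derive_not_both_0 t Hdom).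
  - unfold Rdiv in Hflux'.
    apply Rmult_integral in Hflux' as [Hflux' | Hinv]; [| apply Rinv_neq_0_compat in Hinv; lra].
    apply Rmult_integral in Hflux' as [? | ?]; [contradiction | assumption].
  - pose proof (Hzero t Ht) as Hft. unfold flux in Hft.
    apply Rmult_integral in Hft as [? | ?]; [lra | assumption].
Qed.

Lemma sq_L_decreasing_at_critical_points (r1 r2 : R) : inDom k r2 -> 0 < r1 < r2 -> m < sinK k r1 ->
  Derive L r1 = 0 -> Derive L r2 = 0 -> L r2 ^ 2 < L r1 ^ 2.
Proof.
  intros Hr2 Hr12 HSm HL'1 HL'2.
  pose proof (inDom_le k r1 r2 Hr2 (proj1 Hr12)) as Hdom.
  assert (HS : forall t, r1 <= t <= r2 -> m < sinK k t).
  { intros t Ht. apply (Rlt_le_trans _ (sinK k r1)); [exact HSm |].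
    apply sinK_le; [lra | apply Hdom; lra]. }
  assert (Hsonin1 : sonin r1 = L r1 ^ 2) by (unfold sonin, flux; rewrite HL'1; unfold Rdiv; ring).
  assert (Hsonin2 : sonin r2 = L r2 ^ 2) by (unfold sonin, flux; rewrite HL'2; unfold Rdiv; ring).
  apply Rnot_le_lt. intros Hge.
  assert (Hconst : forall t, r1 < t < r2 -> sonin t = sonin r1).
  { intros t Ht.
    pose proof (sonin_nonincreasing r1 t (Hdom t ltac:(lra)) ltac:(lra) HSm).
    pose proof (sonin_nonincreasing t r2 Hr2 ltac:(lra) (HS t ltac:(lra))). lra. }
  set (t0 := (r1 + r2) / 2).
  apply (flux_not_constantly_0 r1 r2 t0); [unfold t0; lra | apply Hdom; unfold t0; lra |
    pose proof (HS t0 ltac:(unfold t0; lra)); lra |].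
  intros t Ht. pose proof (sinK_pos k t (Hdom t ltac:(lra))). pose proof (HS t ltac:(lra)).
  pose proof (cosK_pos k t ltac:(lra) (proj2 (Hdom t ltac:(lra)))).
  pose proof (is_derive_const_on sonin r1 r2 (sonin r1) t _ Ht Hconst
                (is_derive_sonin t (Hdom t ltac:(lra)) (HS t ltac:(lra)))) as Hsonin'.
  assert (Hgap : 0 < sinK k t ^ 2 - m ^ 2) by nra.
  assert (Hden : 0 < (sinK k t ^ 2 - m ^ 2) ^ 2) by (apply pow_lt; lra).
  set (w := 2 * sinK k t * cosK k t / (sinK k t ^ 2 - m ^ 2) ^ 2).
  assert (Hw : 0 < w).
  { apply Rdiv_lt_0_compat; [apply Rmult_lt_0_compat; [apply Rmult_lt_0_compat |] |]; lra. }
  assert (Hflux2 : flux t ^ 2 * w = 0).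
  { rewrite <- (Ropp_involutive (flux t ^ 2 * w)), <- Ropp_0. f_equal.
    rewrite <- Hsonin'. unfold w. field. lra. }
  apply Rmult_integral in Hflux2 as [Hflux2 | Hw0]; [nra | lra].
Qed.

Lemma extremum_Derive_0 (r : R) : inDom k r -> local_extremum L r -> Derive L r = 0.
Proof. intros Hr Hext. exact (local_extremum_is_derive_0 L r _ Hext (is_derive_L r Hr)). Qed.

Lemma extremum_sinK_gt (r : R) : inDom k r -> local_extremum L r -> m < sinK k r.
Proof.
  intros Hr Hext. apply Rnot_le_lt. intros HSr.
  pose proof (extremum_Derive_0 r Hr Hext). pose proof (L_Derive_pos_of_sinK_le r Hr HSr). lra.
Qed.

End Solution.

Theorem mainTheorem3 (k m : R) (L : R -> R) :
  0 < m -> is_L k m L ->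
  (forall r1 r2 : R,
     inDom k r1 -> inDom k r2 -> r1 < r2 ->
     local_extremum L r1 -> local_extremum L r2 ->
     Rabs (L r2) < Rabs (L r1))
  /\
  (forall r1 : R,
     inDom k r1 -> local_extremum L r1 ->
     (forall r, inDom k r -> r < r1 -> ~ local_extremum L r) ->
     sinK_inv k m <= r1).
Proof.
  intros Hm HL. split.
  - intros r1 r2 Hr1 Hr2 Hr12 Hext1 Hext2.
    apply Rsqr_lt_abs_0. rewrite !Rsqr_pow2.
    apply (sq_L_decreasing_at_critical_points k m L Hm HL r1 r2 Hr2);
      [split; [apply Hr1 | exact Hr12] | ..].
    + exact (extremum_sinK_gt k m L HL r1 Hr1 Hext1).
    + exact (extremum_Derive_0 k m L HL r1 Hr1 Hext1).
    + exact (extremum_Derive_0 k m L HL r2 Hr2 Hext2).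
  -
    intros r1 Hr1 Hext1 _.
    exact (sinK_inv_le k m r1 Hm Hr1 (extremum_sinK_gt k m L HL r1 Hr1 Hext1)).
Qed.
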